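(* Let $A$ be a commutative special Frobenius algebra in $\mathcal{C}$ whose underlying object decomposes as a direct sum $A=1\oplus F$ of the tensor unit $1$ and an object $F$, where $F\neq 0$ and $\theta_F=-\mathrm{id}_F$. Then $F\otimes F\cong 1$.
   Context: Standing assumptions: $k$ is a field with $\mathrm{char}(k)\neq 2$. $\mathcal{C}$ is a $k$-linear additive idempotent-complete ribbon category, strict as a monoidal category, with bilinear tensor product and absolutely simple tensor unit ($\mathrm{End}_{\mathcal{C}}(1)=k\,\mathrm{id}_1$), with braiding $c$ and twist $\theta$. A Frobenius algebra in $\mathcal{C}$ is an object $A$ with associative unital multiplication $\mu:A\otimes A\to A$, unit $\eta:1\to A$, coassociative counital comultiplication $\Delta:A\to A\otimes A$, counit $\epsilon:A\to 1$, such that $(\mathrm{id}_A\otimes\mu)\circ(\Delta\otimes\mathrm{id}_A)=\Delta\circ\mu=(\mu\otimes\mathrm{id}_A)\circ(\mathrm{id}_A\otimes\Delta)$. It is commutative if $\mu\circ c_{A,A}=\mu$, and special if $\epsilon\circ\eta\in k^\times\,\mathrm{id}_1$ and $\mu\circ\Delta\in k^\times\,\mathrm{id}_A$. *)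

From HB Require Import structures.
From mathcomp Require Import all_boot all_algebra.
Set Implicit Arguments. Unset Strict Implicit. Unset Printing Implicit Defensive.
Import GRing.Theory.
Local Open Scope ring_scope.

Record ribbonData (k : fieldType) := RibbonData {
  Obj : Type;
  Mor : Obj -> Obj -> lmodType k;
  idm : forall X, Mor X X;
  comp : forall X Y Z, Mor Y Z -> Mor X Y -> Mor X Z;
  tens : Obj -> Obj -> Obj;
  tensm : forall X X' Y Y', Mor X X' -> Mor Y Y' -> Mor (tens X Y) (tens X' Y');
  tunit : Obj;
  assoc : forall X Y Z, Mor (tens (tens X Y) Z) (tens X (tens Y Z));
  assoc_inv : forall X Y Z, Mor (tens X (tens Y Z)) (tens (tens X Y) Z);
  lunit : forall X, Mor (tens tunit X) X;
  lunit_inv : forall X, Mor X (tens tunit X);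
  runit : forall X, Mor (tens X tunit) X;
  runit_inv : forall X, Mor X (tens X tunit);
  braid : forall X Y, Mor (tens X Y) (tens Y X);
  braid_inv : forall X Y, Mor (tens Y X) (tens X Y);
  dualo : Obj -> Obj;
  ev : forall X, Mor (tens (dualo X) X) tunit;
  coev : forall X, Mor tunit (tens X (dualo X));
  twist : forall X, Mor X X;
  twist_inv : forall X, Mor X X
}.

Arguments idm {k C} X : rename.
Arguments comp {k C X Y Z} : rename.
Arguments tensm {k C X X' Y Y'} : rename.
Arguments assoc {k C} X Y Z : rename.
Arguments assoc_inv {k C} X Y Z : rename.
Arguments lunit {k C} X : rename.
Arguments lunit_inv {k C} X : rename.
Arguments runit {k C} X : rename.
Arguments runit_inv {k C} X : rename.
Arguments braid {k C} X Y : rename.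
Arguments braid_inv {k C} X Y : rename.
Arguments ev {k C} X : rename.
Arguments coev {k C} X : rename.
Arguments twist {k C} X : rename.
Arguments twist_inv {k C} X : rename.
Arguments tens {k C} : rename.
Arguments tunit {k C} : rename.
Arguments dualo {k C} : rename.

Section RibbonDefs.
Variables (k : fieldType) (C : ribbonData k).
Local Notation Ob := (Obj C).
Local Notation I := (@tunit k C).
Local Notation "g \o f" := (comp g f).
Local Notation "f \x g" := (tensm f g) (at level 40, left associativity).

Definition inverses (X Y : Ob) (f : Mor X Y) (g : Mor Y X) :=
  g \o f = idm X /\ f \o g = idm Y.

Definition isomorphic (X Y : Ob) :=
  exists (f : Mor X Y) (g : Mor Y X), inverses f g.

Definition is_biproduct (X Y S : Ob) (i1 : Mor X S) (p1 : Mor S X)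
    (i2 : Mor Y S) (p2 : Mor S Y) :=
  [/\ p1 \o i1 = idm X, p2 \o i2 = idm Y, p1 \o i2 = 0, p2 \o i1 = 0
    & (i1 \o p1) + (i2 \o p2) = idm S].

Definition is_zero_obj (X : Ob) := idm X = 0.

Definition dualm (X Y : Ob) (f : Mor X Y) : Mor (dualo Y) (dualo X) :=
  lunit (dualo X) \o (ev Y \x idm (dualo X)) \o assoc_inv (dualo Y) Y (dualo X)
  \o (idm (dualo Y) \x (f \x idm (dualo X))) \o (idm (dualo Y) \x coev X)
  \o runit_inv (dualo Y).

Record ribbonAxioms : Prop := RibbonAxioms {
  compA : forall (X Y Z W : Ob) (f : Mor X Y) (g : Mor Y Z) (h : Mor Z W),
    h \o (g \o f) = (h \o g) \o f;
  comp1m : forall (X Y : Ob) (f : Mor X Y), idm Y \o f = f;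
  compm1 : forall (X Y : Ob) (f : Mor X Y), f \o idm X = f;
  comp_linl : forall (X Y Z : Ob) (a : k) (g1 g2 : Mor Y Z) (f : Mor X Y),
    (a *: g1 + g2) \o f = a *: (g1 \o f) + (g2 \o f);
  comp_linr : forall (X Y Z : Ob) (a : k) (g : Mor Y Z) (f1 f2 : Mor X Y),
    g \o (a *: f1 + f2) = a *: (g \o f1) + (g \o f2);
  zero_exists : exists Z : Ob, is_zero_obj Z;
  biproduct_exists : forall X Y : Ob, exists (S : Ob) (i1 : Mor X S) (p1 : Mor S X)
    (i2 : Mor Y S) (p2 : Mor S Y), is_biproduct i1 p1 i2 p2;
  idem_split : forall (X : Ob) (e : Mor X X), e \o e = e ->
    exists (Y : Ob) (r : Mor X Y) (s : Mor Y X), r \o s = idm Y /\ s \o r = e;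
  tensm_linl : forall (X X' Y Y' : Ob) (a : k) (f1 f2 : Mor X X') (g : Mor Y Y'),
    (a *: f1 + f2) \x g = a *: (f1 \x g) + (f2 \x g);
  tensm_linr : forall (X X' Y Y' : Ob) (a : k) (f : Mor X X') (g1 g2 : Mor Y Y'),
    f \x (a *: g1 + g2) = a *: (f \x g1) + (f \x g2);
  tensm_id : forall X Y : Ob, idm X \x idm Y = idm (tens X Y);
  tensm_comp : forall (X X' X'' Y Y' Y'' : Ob) (f : Mor X X') (f' : Mor X' X'')
      (g : Mor Y Y') (g' : Mor Y' Y''),
    (f' \o f) \x (g' \o g) = (f' \x g') \o (f \x g);
  assoc_nat : forall (X X' Y Y' Z Z' : Ob) (f : Mor X X') (g : Mor Y Y') (h : Mor Z Z'),
    (f \x (g \x h)) \o assoc X Y Z = assoc X' Y' Z' \o ((f \x g) \x h);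
  assoc_iso : forall X Y Z : Ob, inverses (assoc X Y Z) (assoc_inv X Y Z);
  lunit_nat : forall (X Y : Ob) (f : Mor X Y), f \o lunit X = lunit Y \o (idm I \x f);
  lunit_iso : forall X : Ob, inverses (lunit X) (lunit_inv X);
  runit_nat : forall (X Y : Ob) (f : Mor X Y), f \o runit X = runit Y \o (f \x idm I);
  runit_iso : forall X : Ob, inverses (runit X) (runit_inv X);
  pentagon : forall X Y Z W : Ob,
    assoc X Y (tens Z W) \o assoc (tens X Y) Z W
    = (idm X \x assoc Y Z W) \o assoc X (tens Y Z) W \o (assoc X Y Z \x idm W);
  triangle : forall X Y : Ob,
    (idm X \x lunit Y) \o assoc X I Y = runit X \x idm Y;
  unit_simple : forall f : Mor I I, exists c : k, f = c *: idm I;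
  unit_nonzero : ~ is_zero_obj I;
  braid_nat : forall (X X' Y Y' : Ob) (f : Mor X X') (g : Mor Y Y'),
    (g \x f) \o braid X Y = braid X' Y' \o (f \x g);
  braid_iso : forall X Y : Ob, inverses (braid X Y) (braid_inv X Y);
  hexagon1 : forall X Y Z : Ob,
    assoc Y Z X \o braid X (tens Y Z) \o assoc X Y Z
    = (idm Y \x braid X Z) \o assoc Y X Z \o (braid X Y \x idm Z);
  hexagon2 : forall X Y Z : Ob,
    assoc_inv Z X Y \o braid (tens X Y) Z \o assoc_inv X Y Z
    = (braid X Z \x idm Y) \o assoc_inv X Z Y \o (idm X \x braid Y Z);
  zigzag1 : forall X : Ob,
    runit X \o (idm X \x ev X) \o assoc X (dualo X) X \o (coev X \x idm X)
    \o lunit_inv X = idm X;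
  zigzag2 : forall X : Ob,
    lunit (dualo X) \o (ev X \x idm (dualo X)) \o assoc_inv (dualo X) X (dualo X)
    \o (idm (dualo X) \x coev X) \o runit_inv (dualo X) = idm (dualo X);
  twist_nat : forall (X Y : Ob) (f : Mor X Y), f \o twist X = twist Y \o f;
  twist_iso : forall X : Ob, inverses (twist X) (twist_inv X);
  twist_tens : forall X Y : Ob,
    twist (tens X Y) = (twist X \x twist Y) \o braid Y X \o braid X Y;
  twist_unit : twist I = idm I;
  twist_dual : forall X : Ob, twist (dualo X) = dualm (twist X)
}.

Definition frobenius_algebra (A : Ob) (mu : Mor (tens A A) A) (eta : Mor I A)
    (delta : Mor A (tens A A)) (eps : Mor A I) :=
  [/\ mu \o (mu \x idm A) = mu \o (idm A \x mu) \o assoc A A A,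
      mu \o (eta \x idm A) = lunit A
    & mu \o (idm A \x eta) = runit A] /\
  [/\ assoc A A A \o (delta \x idm A) \o delta = (idm A \x delta) \o delta,
      (eps \x idm A) \o delta = lunit_inv A
    & (idm A \x eps) \o delta = runit_inv A] /\
  ((idm A \x mu) \o assoc A A A \o (delta \x idm A) = delta \o mu /\
   delta \o mu = (mu \x idm A) \o assoc_inv A A A \o (idm A \x delta)).

Definition commutative_alg (A : Ob) (mu : Mor (tens A A) A) :=
  mu \o braid A A = mu.

Definition special_frob (A : Ob) (mu : Mor (tens A A) A) (eta : Mor I A)
    (delta : Mor A (tens A A)) (eps : Mor A I) :=
  (exists c : k, c != 0 /\ eps \o eta = c *: idm I) /\
  (exists d : k, d != 0 /\ mu \o delta = d *: idm A).

End RibbonDefs.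

From Pilot Require Import Defs.
From HB Require Import structures.
From mathcomp Require Import all_boot all_algebra.
Import GRing.Theory.
Set Implicit Arguments. Unset Strict Implicit. Unset Printing Implicit Defensive.
Local Open Scope ring_scope.

(* The twist acts by 1 on the unit and by -1 on F, and it commutes with the
   multiplication of a commutative algebra; as 2 is invertible, morphisms
   between these two eigen-summands that are compatible with the twist vanish.
   Hence eta and eps live on the unit summand, and the product of two elements
   of F has no F-component, so it is a pairing f := eps mu (i2 (x) i2) :
   F (x) F -> 1.  The Frobenius relation together with the counit and triangle
   axioms shows that g := (p2 (x) p2) delta eta is a left inverse of f, and f is
   nonzero because the Frobenius form eps mu is nondegenerate.  Since
   End(1) = k, f g is a scalar, which f g f = f forces to be 1. *)

Section FieldScalars.
Variables (k : fieldType) (V : lmodType k).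

Lemma oppr_fixed_eq0 (v : V) : (2%:R : k) != 0 -> v = - v -> v = 0.
Proof.
move=> two_neq0 vN; apply/eqP; have := scaler_eq0 (2%:R : k) v.
by rewrite (negPf two_neq0) /= => <-; rewrite scaler_nat mulr2n {2}vN subrr.
Qed.

Lemma scaler_inj_scalar (a b : k) (v : V) : v != 0 -> a *: v = b *: v -> a = b.
Proof.
move=> v_neq0 eq_ab; apply/eqP; rewrite -subr_eq0.
by have := scaler_eq0 (a - b) v; rewrite (negPf v_neq0) orbF scalerBl eq_ab subrr eqxx.
Qed.

Section Linear.
Variables (U : lmodType k) (phi : U -> V).
Hypothesis phi_lin : forall a x y, phi (a *: x + y) = a *: phi x + phi y.

Lemma lin_add x y : phi (x + y) = phi x + phi y.
Proof. by have := phi_lin 1 x y; rewrite !scale1r. Qed.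

Lemma lin_zero : phi 0 = 0.
Proof. by apply: (addrI (phi 0)); rewrite -lin_add !addr0. Qed.

Lemma lin_scale a x : phi (a *: x) = a *: phi x.
Proof. by rewrite -[a *: x]addr0 phi_lin lin_zero addr0. Qed.

Lemma lin_opp x : phi (- x) = - phi x.
Proof. by rewrite -scaleN1r lin_scale scaleN1r. Qed.

End Linear.
End FieldScalars.

Arguments lin_add {k V U} phi.
Arguments lin_zero {k V U} phi.
Arguments lin_scale {k V U} phi.
Arguments lin_opp {k V U} phi.

Section RibbonCategory.
Variables (k : fieldType) (C : ribbonData k).
Hypothesis HC : ribbonAxioms C.
Local Notation Ob := (Obj C).
Local Notation I := (@tunit k C).
Local Notation "g \o f" := (Defs.comp g f).
Local Notation "f \x g" := (tensm f g) (at level 40, left associativity).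

Section Bilinearity.
Variables (X Y Z X' Y' : Ob).

Lemma comp0l (f : Mor X Y) : (0 : Mor Y Z) \o f = 0.
Proof. exact: (lin_zero (fun g => g \o f) (fun a g1 g2 => comp_linl HC a g1 g2 f)). Qed.
Lemma comp0r (g : Mor Y Z) : g \o (0 : Mor X Y) = 0.
Proof. exact: (lin_zero (fun f => g \o f) (fun a f1 f2 => comp_linr HC a g f1 f2)). Qed.
Lemma compDl (g1 g2 : Mor Y Z) (f : Mor X Y) : (g1 + g2) \o f = (g1 \o f) + (g2 \o f).
Proof. exact: (lin_add (fun g => g \o f) (fun a g1 g2 => comp_linl HC a g1 g2 f)). Qed.
Lemma compDr (g : Mor Y Z) (f1 f2 : Mor X Y) : g \o (f1 + f2) = (g \o f1) + (g \o f2).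
Proof. exact: (lin_add (fun f => g \o f) (fun a f1 f2 => comp_linr HC a g f1 f2)). Qed.
Lemma compZl a (g : Mor Y Z) (f : Mor X Y) : (a *: g) \o f = a *: (g \o f).
Proof. exact: (lin_scale (fun g => g \o f) (fun a g1 g2 => comp_linl HC a g1 g2 f)). Qed.
Lemma compZr a (g : Mor Y Z) (f : Mor X Y) : g \o (a *: f) = a *: (g \o f).
Proof. exact: (lin_scale (fun f => g \o f) (fun a f1 f2 => comp_linr HC a g f1 f2)). Qed.
Lemma compNl (g : Mor Y Z) (f : Mor X Y) : (- g) \o f = - (g \o f).
Proof. exact: (lin_opp (fun g => g \o f) (fun a g1 g2 => comp_linl HC a g1 g2 f)). Qed.
Lemma compNr (g : Mor Y Z) (f : Mor X Y) : g \o (- f) = - (g \o f).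
Proof. exact: (lin_opp (fun f => g \o f) (fun a f1 f2 => comp_linr HC a g f1 f2)). Qed.

Lemma tensm0r (f : Mor X X') : f \x (0 : Mor Y Y') = 0.
Proof. exact: (lin_zero (fun g => f \x g) (fun a g1 g2 => tensm_linr HC a f g1 g2)). Qed.
Lemma tensmDl (f1 f2 : Mor X X') (g : Mor Y Y') : (f1 + f2) \x g = f1 \x g + f2 \x g.
Proof. exact: (lin_add (fun f => f \x g) (fun a f1 f2 => tensm_linl HC a f1 f2 g)). Qed.
Lemma tensmDr (f : Mor X X') (g1 g2 : Mor Y Y') : f \x (g1 + g2) = f \x g1 + f \x g2.
Proof. exact: (lin_add (fun g => f \x g) (fun a g1 g2 => tensm_linr HC a f g1 g2)). Qed.
Lemma tensmZl a (f : Mor X X') (g : Mor Y Y') : (a *: f) \x g = a *: (f \x g).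
Proof. exact: (lin_scale (fun f => f \x g) (fun a f1 f2 => tensm_linl HC a f1 f2 g)). Qed.
Lemma tensmZr a (f : Mor X X') (g : Mor Y Y') : f \x (a *: g) = a *: (f \x g).
Proof. exact: (lin_scale (fun g => f \x g) (fun a g1 g2 => tensm_linr HC a f g1 g2)). Qed.
Lemma tensmNl (f : Mor X X') (g : Mor Y Y') : (- f) \x g = - (f \x g).
Proof. exact: (lin_opp (fun f => f \x g) (fun a f1 f2 => tensm_linl HC a f1 f2 g)). Qed.
Lemma tensmNr (f : Mor X X') (g : Mor Y Y') : f \x (- g) = - (f \x g).
Proof. exact: (lin_opp (fun g => f \x g) (fun a g1 g2 => tensm_linr HC a f g1 g2)). Qed.

End Bilinearity.

Lemma compmA (X Y Z W : Ob) (f : Mor X Y) (g : Mor Y Z) (h : Mor Z W) :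
  h \o (g \o f) = h \o g \o f.
Proof. exact: (Defs.compA HC). Qed.

Lemma comp_lcongr2 (X Y Z W : Ob) (a : Mor Y Z) (b : Mor X Y) (d : Mor X Z)
    (q : Mor Z W) :
  a \o b = d -> q \o a \o b = q \o d.
Proof. by move=> <-; rewrite compmA. Qed.

Lemma comp_lcongr3 (X Y Y' Z W : Ob) (a : Mor Y' Z) (b : Mor Y Y') (c : Mor X Y)
    (d : Mor X Z) (q : Mor Z W) :
  a \o b \o c = d -> q \o a \o b \o c = q \o d.
Proof. by move=> <-; rewrite !compmA. Qed.

Lemma inverses_conj (X X' Y Y' : Ob) (u : Mor X Y) (u' : Mor Y X)
    (v : Mor X' Y') (v' : Mor Y' X') (h : Mor X X') (h' : Mor Y Y') :
  inverses u u' -> inverses v v' -> h' \o u = v \o h -> v' \o h' = h \o u'.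
Proof.
move=> [_ uu'] [v'v _] nat_h.
by rewrite -[LHS](compm1 HC) -uu' compmA -(compmA u) nat_h compmA v'v (comp1m HC).
Qed.

Lemma assoc_inv_nat (X X' Y Y' Z Z' : Ob) (f : Mor X X') (g : Mor Y Y')
    (h : Mor Z Z') :
  assoc_inv X' Y' Z' \o (f \x (g \x h)) = ((f \x g) \x h) \o assoc_inv X Y Z.
Proof. exact: inverses_conj (assoc_iso HC _ _ _) (assoc_iso HC _ _ _) (assoc_nat HC _ _ _). Qed.

Lemma lunit_inv_nat (X Y : Ob) (f : Mor X Y) :
  lunit_inv Y \o f = (idm I \x f) \o lunit_inv X.
Proof. exact: inverses_conj (lunit_iso HC X) (lunit_iso HC Y) (lunit_nat HC f). Qed.

Lemma triangle_inv (X Y : Ob) :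
  (runit X \x idm Y) \o assoc_inv X I Y \o (idm X \x lunit_inv Y) = idm (tens X Y).
Proof.
have [_ lunitK] := lunit_iso HC Y; have [_ assocK] := assoc_iso HC X I Y.
rewrite -(triangle HC) -(compmA (assoc_inv X I Y)) assocK (compm1 HC).
by rewrite -(tensm_comp HC) (comp1m HC) lunitK (tensm_id HC).
Qed.

Lemma twist_from_unit (Y : Ob) (f : Mor I Y) : twist Y \o f = f.
Proof. by rewrite -(twist_nat HC) (twist_unit HC) (compm1 HC). Qed.

Lemma twist_to_unit (Y : Ob) (f : Mor Y I) : f \o twist Y = f.
Proof. by rewrite (twist_nat HC) (twist_unit HC) (comp1m HC). Qed.

Lemma commutative_alg_twist (A : Ob) (mu : Mor (tens A A) A) :
  commutative_alg mu -> twist A \o mu = mu \o (twist A \x twist A).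
Proof.
rewrite /commutative_alg => mu_comm.
rewrite -(twist_nat HC) (twist_tens HC) (braid_nat HC) !compmA mu_comm.
by rewrite -compmA (braid_nat HC) compmA mu_comm.
Qed.

Section OddObjects.
Hypothesis two_neq0 : (2%:R : k) != 0.

Lemma comp_to_odd_eq0 (X Y Z : Ob) (g : Mor Y Z) (h : Mor X Y) :
  twist Z = - idm Z -> twist Y \o h = h -> g \o h = 0.
Proof.
move=> twistZ twist_h; apply: oppr_fixed_eq0 two_neq0 _.
by rewrite -{1}twist_h compmA (twist_nat HC) twistZ compNl (comp1m HC) compNl.
Qed.

Lemma comp_from_odd_eq0 (X Y Z : Ob) (g : Mor Y Z) (h : Mor X Y) :
  twist X = - idm X -> g \o twist Y = g -> g \o h = 0.
Proof.
move=> twistX twist_g; apply: oppr_fixed_eq0 two_neq0 _.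
by rewrite -{1}twist_g -compmA -(twist_nat HC) twistX !compNr (compm1 HC).
Qed.

End OddObjects.

Lemma retraction_to_unit_inverses (X : Ob) (f : Mor X I) (g : Mor I X) :
  g \o f = idm X -> f != 0 -> inverses f g.
Proof.
move=> gf f_neq0; split=> //.
have [t fg] := unit_simple HC (f \o g).
suff t1 : t = 1 by rewrite fg t1 scale1r.
apply: (scaler_inj_scalar f_neq0).
by rewrite scale1r -[f in RHS](compm1 HC) -gf compmA fg compZl (comp1m HC).
Qed.

Section UnitSummand.
Variables (F A : Ob) (i1 : Mor I A) (p1 : Mor A I) (i2 : Mor F A) (p2 : Mor A F).
Hypothesis Hsum : is_biproduct i1 p1 i2 p2.

Lemma biproduct_factor_l (X : Ob) (x : Mor X A) : p2 \o x = 0 -> x = i1 \o (p1 \o x).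
Proof.
case: Hsum => _ _ _ _ sum_id p2x.
by rewrite -[LHS](comp1m HC) -sum_id compDl -!compmA p2x comp0r addr0.
Qed.

Lemma biproduct_factor_r (Y : Ob) (y : Mor A Y) : y \o i2 = 0 -> y = y \o i1 \o p1.
Proof.
case: Hsum => _ _ _ _ sum_id yi2.
by rewrite -[LHS](compm1 HC) -sum_id compDr !compmA yi2 comp0l addr0.
Qed.

Lemma unit_summand_projector (c : k) (x : Mor I A) (y : Mor A I) :
  c != 0 -> p2 \o x = 0 -> y \o i2 = 0 -> y \o x = c *: idm I ->
  i1 \o p1 = c^-1 *: (x \o y).
Proof.
move=> c_neq0 p2x yi2 yx.
have [a p1x] := unit_simple HC (p1 \o x); have [b yi1] := unit_simple HC (y \o i1).
have xE : x = a *: i1 by rewrite (biproduct_factor_l p2x) p1x compZr (compm1 HC).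
have yE : y = b *: p1 by rewrite (biproduct_factor_r yi2) yi1 compZl (comp1m HC).
have [p1i1 _ _ _ _] := Hsum.
have I_neq0 : idm I != 0 by apply/eqP; exact: unit_nonzero HC.
have ba : b * a = c.
  by apply: (scaler_inj_scalar I_neq0); rewrite -yx xE yE compZl compZr p1i1 scalerA.
by rewrite xE yE compZl compZr !scalerA -ba [a * b]mulrC mulVf ?scale1r ?ba.
Qed.

End UnitSummand.

Section Frobenius.
Variables (A : Ob) (mu : Mor (tens A A) A) (eta : Mor I A)
  (delta : Mor A (tens A A)) (eps : Mor A I).
Hypothesis Hfrob : frobenius_algebra mu eta delta eps.

Lemma unit_mull : mu \o (eta \x idm A) = lunit A.
Proof. by case: Hfrob => [[]]. Qed.

Lemma unit_mulr : mu \o (idm A \x eta) = runit A.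
Proof. by case: Hfrob => [[]]. Qed.

Lemma counit_comull : (eps \x idm A) \o delta = lunit_inv A.
Proof. by case: Hfrob => [_ [[]]]. Qed.

Lemma counit_comulr : (idm A \x eps) \o delta = runit_inv A.
Proof. by case: Hfrob => [_ [[]]]. Qed.

Lemma frobenius_l : (idm A \x mu) \o assoc A A A \o (delta \x idm A) = delta \o mu.
Proof. by case: Hfrob => [_ [_ []]]. Qed.

Lemma frobenius_r : delta \o mu = (mu \x idm A) \o assoc_inv A A A \o (idm A \x delta).
Proof. by case: Hfrob => [_ [_ []]]. Qed.

Lemma frobenius_snake :
  runit A \o (idm A \x (eps \o mu)) \o assoc A A A \o ((delta \o eta) \x idm A)
    \o lunit_inv A = idm A.
Proof.
have [_ runitK] := runit_iso HC A; have [_ lunitK] := lunit_iso HC A.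
have split_form : idm A \x (eps \o mu) = (idm A \x eps) \o (idm A \x mu).
  by rewrite -(tensm_comp HC) (comp1m HC).
have split_copairing : (delta \o eta) \x idm A = (delta \x idm A) \o (eta \x idm A).
  by rewrite -(tensm_comp HC) (comp1m HC).
rewrite split_form split_copairing !compmA (comp_lcongr3 _ frobenius_l) !compmA.
rewrite (comp_lcongr2 _ counit_comulr).
by rewrite runitK (comp1m HC) unit_mull lunitK.
Qed.

Lemma frobenius_form_nondegenerate (X : Ob) (h : Mor X A) :
  eps \o mu \o (idm A \x h) = 0 -> h = 0.
Proof.
move=> form_h.
have slide_h : ((delta \o eta) \x idm A) \o (idm I \x h)
    = ((idm A \x idm A) \x h) \o ((delta \o eta) \x idm X).
  by rewrite -!(tensm_comp HC) !(comp1m HC) !(compm1 HC) (tensm_id HC) (comp1m HC).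
have kill_h : (idm A \x (eps \o mu)) \o (idm A \x (idm A \x h)) = 0.
  by rewrite -(tensm_comp HC) (comp1m HC) form_h tensm0r.
rewrite -[h](comp1m HC) -frobenius_snake -compmA lunit_inv_nat compmA.
rewrite -(compmA (idm I \x h)) slide_h compmA -(compmA _ (assoc A A A)).
by rewrite -(assoc_nat HC) compmA -(compmA _ (idm A \x (eps \o mu))) kill_h comp0r !comp0l.
Qed.

End Frobenius.

Section OddSummand.
Hypothesis two_neq0 : (2%:R : k) != 0.
Variables (A F : Ob) (mu : Mor (tens A A) A) (eta : Mor I A)
  (delta : Mor A (tens A A)) (eps : Mor A I)
  (i1 : Mor I A) (p1 : Mor A I) (i2 : Mor F A) (p2 : Mor A F) (c : k).
Hypotheses (Hfrob : frobenius_algebra mu eta delta eps)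
  (Hcomm : commutative_alg mu)
  (c_neq0 : c != 0) (eps_eta : eps \o eta = c *: idm I)
  (Hsum : is_biproduct i1 p1 i2 p2) (twistF : twist F = - idm F).

Lemma odd_unit : p2 \o eta = 0.
Proof. exact (comp_to_odd_eq0 two_neq0 p2 twistF (twist_from_unit eta)). Qed.

Lemma counit_odd : eps \o i2 = 0.
Proof. exact (comp_from_odd_eq0 two_neq0 i2 twistF (twist_to_unit eps)). Qed.

Lemma odd_mul_odd : p2 \o mu \o (i2 \x i2) = 0.
Proof.
have twist_i2 : twist A \o i2 = - i2.
  by rewrite -(twist_nat HC) twistF compNr (compm1 HC).
have even_prod : twist A \o (mu \o (i2 \x i2)) = mu \o (i2 \x i2).
  rewrite compmA commutative_alg_twist // -compmA -(tensm_comp HC) twist_i2.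
  by rewrite tensmNl tensmNr opprK.
by rewrite -compmA (comp_to_odd_eq0 two_neq0 p2 twistF even_prod).
Qed.

Lemma unit_projectorE : i1 \o p1 = c^-1 *: (eta \o eps).
Proof. exact (unit_summand_projector Hsum c_neq0 odd_unit counit_odd eps_eta). Qed.

Lemma idm_decomp : idm A = c^-1 *: (eta \o eps) + (i2 \o p2).
Proof. by have [_ _ _ _ <-] := Hsum; rewrite unit_projectorE. Qed.

Lemma odd_mul_id : p2 \o mu \o (i2 \x idm A) = c^-1 *: (runit F \o (idm F \x eps)).
Proof.
have [_ p2i2 _ _ _] := Hsum.
have even_part : i2 \x (eta \o eps) = (idm A \x eta) \o (i2 \x eps).
  by rewrite -(tensm_comp HC) (comp1m HC).
have odd_part : i2 \x (i2 \o p2) = (i2 \x i2) \o (idm F \x p2).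
  by rewrite -(tensm_comp HC) (compm1 HC).
rewrite idm_decomp tensmDr compDr tensmZr even_part odd_part compZr !compmA.
rewrite odd_mul_odd comp0l addr0 (comp_lcongr2 _ (unit_mulr Hfrob)) (runit_nat HC).
by rewrite -compmA -(tensm_comp HC) p2i2 (comp1m HC).
Qed.

Lemma counit_comul_odd : (eps \x p2) \o delta \o i2 = lunit_inv F.
Proof.
have [_ p2i2 _ _ _] := Hsum.
have split_eps : eps \x p2 = (idm I \x p2) \o (eps \x idm A).
  by rewrite -(tensm_comp HC) (comp1m HC) (compm1 HC).
rewrite split_eps (comp_lcongr2 _ (counit_comull Hfrob)) -lunit_inv_nat.
by rewrite -compmA p2i2 (compm1 HC).
Qed.

Lemma odd_comul_mul : (p2 \x p2) \o delta \o mu \o (i2 \x i2) = c^-1 *: idm (tens F F).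
Proof.
have slide : (idm A \x delta) \o (i2 \x i2)
    = (i2 \x (idm A \x idm A)) \o (idm F \x (delta \o i2)).
  by rewrite -!(tensm_comp HC) (comp1m HC) (compm1 HC) (tensm_id HC) (comp1m HC).
have merge : (p2 \x p2) \o (mu \x idm A) \o ((i2 \x idm A) \x idm A)
    = (p2 \o mu \o (i2 \x idm A)) \x p2.
  by rewrite -!(tensm_comp HC) !(compm1 HC).
have split_runit : (runit F \o (idm F \x eps)) \x p2
    = (runit F \x idm F) \o ((idm F \x eps) \x p2).
  by rewrite -(tensm_comp HC) (comp1m HC).
rewrite (comp_lcongr2 _ (frobenius_r Hfrob)) !compmA (comp_lcongr2 _ slide) compmA.
rewrite (comp_lcongr2 _ (assoc_inv_nat _ _ _)) compmA merge odd_mul_id tensmZl !compZl.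
congr (_ *: _); rewrite split_runit -(compmA (assoc_inv _ _ _)) -assoc_inv_nat -!compmA.
rewrite -(tensm_comp HC) (comp1m HC) (compmA i2) counit_comul_odd.
by rewrite !compmA triangle_inv.
Qed.

Lemma odd_pairing_retraction :
  (p2 \x p2) \o delta \o eta \o (eps \o mu \o (i2 \x i2)) = idm (tens F F).
Proof.
have even_prod : i1 \o p1 \o (mu \o (i2 \x i2)) = mu \o (i2 \x i2).
  by rewrite -compmA -(biproduct_factor_l Hsum) // compmA odd_mul_odd.
have eta_eps : eta \o eps = c *: (i1 \o p1).
  by rewrite unit_projectorE scalerA mulfV ?scale1r.
rewrite -(compmA (i2 \x i2)) compmA -(compmA eps) eta_eps compZr compZl.
by rewrite -compmA even_prod compmA odd_comul_mul scalerA mulfV ?scale1r.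
Qed.

Lemma odd_pairing_neq0 : ~ is_zero_obj F -> eps \o mu \o (i2 \x i2) != 0.
Proof.
move=> F_neq0; apply/eqP => pairing0; apply: F_neq0.
have [_ p2i2 _ _ _] := Hsum.
suff i2_0 : i2 = 0 by rewrite /is_zero_obj -p2i2 i2_0 comp0r.
apply: (frobenius_form_nondegenerate Hfrob).
have even_part : (eta \o eps) \x i2 = (eta \x i2) \o (eps \x idm F).
  by rewrite -(tensm_comp HC) (compm1 HC).
have odd_part : (i2 \o p2) \x i2 = (i2 \x i2) \o (p2 \x idm F).
  by rewrite -(tensm_comp HC) (compm1 HC).
have unit_odd : eps \o mu \o (eta \x i2) = 0.
  have -> : eta \x i2 = (eta \x idm A) \o (idm I \x i2).
    by rewrite -(tensm_comp HC) (comp1m HC) (compm1 HC).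
  rewrite compmA -(compmA _ mu) (unit_mull Hfrob) -compmA -(lunit_nat HC).
  by rewrite compmA counit_odd comp0l.
rewrite idm_decomp tensmDl compDr tensmZl compZr even_part odd_part !compmA.
by rewrite pairing0 unit_odd !comp0l scaler0 addr0.
Qed.

Lemma odd_square_iso_unit : ~ is_zero_obj F -> isomorphic (tens F F) I.
Proof.
move=> F_neq0; exists (eps \o mu \o (i2 \x i2)), ((p2 \x p2) \o delta \o eta).
exact: retraction_to_unit_inverses odd_pairing_retraction (odd_pairing_neq0 F_neq0).
Qed.

End OddSummand.
End RibbonCategory.

Theorem mainTheorem2 (k : fieldType) (char_ne2 : (2%:R : k) != 0)
    (C : ribbonData k) (HC : ribbonAxioms C)
    (A F : Obj C) (mu : Mor (tens A A) A) (eta : Mor tunit A)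
    (delta : Mor A (tens A A)) (eps : Mor A tunit)
    (Hfrob : frobenius_algebra mu eta delta eps)
    (Hcomm : commutative_alg mu)
    (Hspec : special_frob mu eta delta eps)
    (i1 : Mor tunit A) (p1 : Mor A tunit) (i2 : Mor F A) (p2 : Mor A F)
    (Hsum : is_biproduct i1 p1 i2 p2)
    (HF0 : ~ is_zero_obj F)
    (HthF : twist F = - idm F) :
  isomorphic (tens F F) tunit.
Proof.
have [[c [c_neq0 eps_eta]] _] := Hspec.
exact (odd_square_iso_unit HC char_ne2 Hfrob Hcomm c_neq0 eps_eta Hsum HthF HF0).
Qed.
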